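(* Let $d$ be a positive integer, let $y_1, \ldots, y_d$ and $C$ be positive real numbers, and define $\pi : \mathbb{Z}^d \to \mathbb{R}$ by $\pi(x_1, \ldots, x_d) = \sum_{i=1}^d x_i y_i$. Let $O^d = \mathbb{Z}_{\ge 0}^d$. Suppose $S \subseteq O^d$ is a finite set such that $\pi(\mathbf{s}) \le C$ for all $\mathbf{s} \in S$, and such that $O^d + (O^d \setminus S) \subseteq O^d \setminus S$, where $A + B = \{a + b : a \in A, b \in B\}$. Then \[ (d+1) \sum_{\mathbf{s} \in S} \bigl(C - \pi(\mathbf{s})\bigr) \ge C\,|S|. \] *)

From HB Require Import structures.
From mathcomp Require Import all_boot all_order all_algebra.
Set Implicit Arguments. Unset Strict Implicit. Unset Printing Implicit Defensive.
Import Order.TTheory GRing.Theory Num.Theory.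
Local Open Scope ring_scope.

Definition pt (d : nat) := {ffun 'I_d -> nat}.

Definition ptadd (d : nat) (a b : pt d) : pt d := [ffun i => (a i + b i)%N].

Definition proj (R : realFieldType) (d : nat) (y : 'I_d -> R) (x : pt d) : R :=
  \sum_(i < d) (x i)%:R * y i.

From HB Require Import structures.
From mathcomp Require Import all_boot all_order all_algebra.
From mathcomp Require Import zify ring lra.
Set Implicit Arguments. Unset Strict Implicit.
Import Order.TTheory GRing.Theory Num.Theory.
Local Open Scope ring_scope.

(* Proof by double counting along coordinate lines.  Fix a coordinate i and
   call t "i-below" s when t and s agree off i and t_i < s_i.  For a finite
   down-closed S (the complement is an upward-closed ideal):
   - every s in S has exactly s_i points of S i-below it, namely the points
     obtained by lowering its i-th coordinate to 0, ..., s_i - 1;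
   - if n points of S lie i-above s, one of them exceeds s in coordinate i by
     at least n (their i-coordinates are distinct), so n * y_i <= C - pi(s).
   Counting the pairs (t, s) of S with t i-below s in both ways gives
   sum_s s_i y_i <= sum_s (C - pi(s)) =: X for every i; summing over the d
   coordinates yields sum_s pi(s) <= d X, and as X = C|S| - sum_s pi(s) this
   is exactly (d + 1) X >= C |S|. *)

Lemma double_count (T : Type) (e : rel T) (r : seq T) :
  (\sum_(s <- r) count (e ^~ s) r = \sum_(t <- r) count (e t) r)%N.
Proof.
have count_sum (a : pred T) : count a r = (\sum_(x <- r) a x)%N.
  by rewrite -sumn_count sumnE big_map.
under eq_bigr do rewrite count_sum.
by rewrite exchange_big /=; under [RHS]eq_bigr do rewrite count_sum.
Qed.

Lemma sum_const_seq (V : nmodType) (T : Type) (r : seq T) (c : V) :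
  \sum_(x <- r) c = c *+ size r.
Proof. by rewrite big_const_seq count_predT iter_addr_0. Qed.

Lemma uniq_nat_large (M : seq nat) :
  uniq M -> (0 < size M)%N -> exists2 x, x \in M & (size M <= x.+1)%N.
Proof.
move=> uM Mpos; apply/hasP/negPn/negP => /hasPn small.
have sub : {subset M <= iota 0 (size M).-1}.
  by move=> x xM; rewrite mem_iota add0n; have := small x xM; lia.
by have := uniq_leq_size uM sub; rewrite size_iota leqNgt ltn_predL Mpos.
Qed.

Definition down_closed (d : nat) (S : seq (pt d)) : Prop :=
  forall a b : pt d, b \notin S -> ptadd a b \notin S.

Section CoordinateLines.

Variables (d : nat) (i : 'I_d).

Definition line_below (t s : pt d) : bool :=
  (t i < s i)%N && [forall j, (j != i) ==> (t j == s j)].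

Definition set_coord (s : pt d) (k : nat) : pt d :=
  [ffun j => if j == i then k else s j].

Lemma set_coord_inj (s : pt d) : injective (set_coord s).
Proof. by move=> k1 k2 /ffunP /(_ i); rewrite !ffunE eqxx. Qed.

Lemma line_below_set_coord (s t : pt d) :
  line_below t s = (t \in map (set_coord s) (iota 0 (s i))).
Proof.
apply/andP/mapP => [[lt /forallP off_i] | [k]].
  exists (t i); first by rewrite mem_iota.
  apply/ffunP => j; rewrite ffunE; case: eqVneq => [-> // | ne].
  by have /implyP/(_ ne)/eqP := off_i j.
rewrite mem_iota add0n => /andP [_ lt_k] ->; split; first by rewrite ffunE eqxx.
by apply/forallP => j; apply/implyP => ne; rewrite ffunE (negPf ne).
Qed.

Lemma proj_line (R : realFieldType) (y : 'I_d -> R) (s t : pt d) :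
  line_below s t -> proj y t = proj y s + ((t i)%:R - (s i)%:R) * y i.
Proof.
case/andP => _ /forallP off_i; rewrite /proj (bigD1 i) //= [in RHS](bigD1 i) //=.
rewrite (eq_bigr (fun j => (s j)%:R * y j)); first by ring.
by move=> j /[dup] ne /= /(implyP (off_i j))/eqP ->.
Qed.

Variable S : seq (pt d).
Hypothesis uniqS : uniq S.

Lemma set_coord_down (s : pt d) (k : nat) :
  down_closed S -> s \in S -> (k <= s i)%N -> set_coord s k \in S.
Proof.
move=> down sS le_k; set a : pt d := [ffun j => if j == i then (s i - k)%N else 0%N].
have lift_back : ptadd a (set_coord s k) = s.
  by apply/ffunP => j; rewrite !ffunE; case: eqVneq => [-> | _]; rewrite ?subnK.
by apply/negPn/negP => /(down a); rewrite lift_back sS.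
Qed.

Lemma count_line_below (s : pt d) :
  down_closed S -> s \in S -> count (line_below ^~ s) S = s i.
Proof.
move=> down sS; rewrite -size_filter -[s i](size_iota 0) -(size_map (set_coord s)).
apply/perm_size/uniq_perm; rewrite ?filter_uniq ?map_inj_uniq ?iota_uniq //.
  exact: set_coord_inj.
move=> t; rewrite mem_filter line_below_set_coord andb_idr // => /mapP [k].
by rewrite mem_iota => /andP [_ /ltnW le_k] ->; exact: set_coord_down.
Qed.

Lemma line_above_inj (s t1 t2 : pt d) :
  line_below s t1 -> line_below s t2 -> t1 i = t2 i -> t1 = t2.
Proof.
case/andP => _ /forallP off1 /andP [_ /forallP off2] eq_i; apply/ffunP => j.
case: (eqVneq j i) => [-> // | ne].
by have /implyP/(_ ne)/eqP <- := off1 j; have /implyP/(_ ne)/eqP <- := off2 j.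
Qed.

(* If n points of S lie above s on its i-th line, then n y_i <= C - pi(s):
   their i-th coordinates are distinct, so one exceeds s_i by at least n. *)
Lemma count_line_above (R : realFieldType) (y : 'I_d -> R) (C : R) (s : pt d) :
  0 < y i -> (forall t, t \in S -> proj y t <= C) ->
  s \in S -> (count (line_below s) S)%:R * y i <= C - proj y s.
Proof.
move=> yi_pos boundS sS; have := boundS s sS.
set n := count _ _; case: (posnP n) => [-> | n_pos] pi_s; first by rewrite mul0r subr_ge0.
set M := map (fun t : pt d => (t i - (s i).+1)%N) (filter (line_below s) S).
have uniqM : uniq M.
  rewrite map_inj_in_uniq ?filter_uniq // => t1 t2.
  rewrite !mem_filter => /andP [b1 _] /andP [b2 _] eq_i.
  apply: (line_above_inj b1 b2); move: b1 b2 eq_i => /andP [? _] /andP [? _]; lia.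
have sizeM : size M = n by rewrite size_map size_filter.
have := uniq_nat_large uniqM; rewrite sizeM => /(_ n_pos) [x /mapP [t]].
rewrite mem_filter => /andP [/[dup] below /andP [lt_st _] tS] -> far.
have gap : (n%:R : R) <= (t i)%:R - (s i)%:R.
  by rewrite -natrB ?ler_nat -?(subnSK lt_st) // ltnW.
have := boundS t tS; rewrite (proj_line y below).
have : n%:R * y i <= ((t i)%:R - (s i)%:R) * y i by rewrite ler_wpM2r // ltW.
lra.
Qed.

End CoordinateLines.

(* Double counting the pairs of S on a common i-th line, with [s] above:
   the i-th coordinates carry at most the total slack of S. *)
Lemma coordinate_mass (R : realFieldType) (d : nat) (y : 'I_d -> R) (C : R)
    (S : seq (pt d)) (i : 'I_d) :
  uniq S -> down_closed S -> 0 < y i -> (forall s, s \in S -> proj y s <= C) ->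
  \sum_(s <- S) (s i)%:R * y i <= \sum_(s <- S) (C - proj y s).
Proof.
move=> uniqS down yi_pos boundS.
rewrite -mulr_suml -natr_sum (eq_big_seq (fun s => count (line_below i ^~ s) S)).
  rewrite double_count natr_sum mulr_suml !big_seq.
  by apply: ler_sum => s sS; exact: count_line_above.
by move=> s sS; rewrite count_line_below.
Qed.

(* The main inequality. *)
Theorem lemma3 (R : realFieldType) (d : nat) (hd : (0 < d)%N)
  (y : 'I_d -> R) (hy : forall i, 0 < y i) (C : R) (hC : 0 < C)
  (S : seq (pt d)) (hS : uniq S)
  (hSC : forall s, s \in S -> proj y s <= C)
  (hdown : forall a b : pt d, b \notin S -> ptadd a b \notin S) :
  (d.+1)%:R * (\sum_(s <- S) (C - proj y s)) >= C * (size S)%:R.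
Proof.
set X := \sum_(s <- S) (C - proj y s).
have total_mass : \sum_(s <- S) proj y s <= X *+ d.
  rewrite /proj exchange_big /= -[d in X *+ d]card_ord -sumr_const.
  by apply: ler_sum => i _; exact: coordinate_mass.
have slack : X = C * (size S)%:R - \sum_(s <- S) proj y s.
  by rewrite /X sumrB sum_const_seq mulr_natr.
by move: total_mass; rewrite -mulr_natr -addn1 natrD; lra.
Qed.
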